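(* Let $\alpha\in\mathbb{R}$ and $\mathbb{Q}[x]^+_{x=\alpha}=\{p\in\mathbb{Q}[x]:p(\alpha)>0\}$. For real $\beta\neq\gamma$ let $S_{\beta,\gamma}=\{p\in\mathbb{Q}[x]: p(\beta)>p(\gamma)\}$; for $z\in\mathbb{C}\setminus\mathbb{R}$ let $S_{z,\bar z}=\{p\in\mathbb{Q}[x]:\operatorname{Im}p(z)>0\}$; for $\delta\in\mathbb{R}$ let $S^+_\delta=\{p\in\mathbb{Q}[x]:p'(\delta)>0\}$ and $S^-_\delta=\{p\in\mathbb{Q}[x]:p'(\delta)<0\}$. Then: (1) for all $\beta,\gamma\in\mathbb{R}\setminus\{\alpha\}$ with $\beta\ne\gamma$, the set $S_{\beta,\gamma}\cap\mathbb{Q}[x]^+_{x=\alpha}$ is not closed under multiplication; moreover, for every $\beta\neq\alpha$, the set $S_{\alpha,\beta}\cap\mathbb{Q}[x]^+_{x=\alpha}$ is not closed under multiplication; (2) for every $z\in\mathbb{C}\setminus\mathbb{R}$, the set $S_{z,\bar z}\cap\mathbb{Q}[x]^+_{x=\alpha}$ is not closed under multiplication; (3) for every real $\delta\neq\alpha$, neither $S^+_\delta\cap\mathbb{Q}[x]^+_{x=\alpha}$ nor $S^-_\delta\cap\mathbb{Q}[x]^+_{x=\alpha}$ is closed under multiplication. *)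

From mathcomp Require Import all_boot all_algebra.
From mathcomp Require Import reals.
From mathcomp.real_closed Require Export complex.
Set Implicit Arguments. Unset Strict Implicit. Unset Printing Implicit Defensive.
Import GRing.Theory Num.Theory.
Local Open Scope ring_scope.

Definition mul_closed (S : {poly rat} -> Prop) : Prop :=
  forall p q : {poly rat}, S p -> S q -> S (p * q).

Definition Qpos_at (R : realType) (alpha : R) (p : {poly rat}) : Prop :=
  0 < (map_poly (ratr : rat -> R) p).[alpha].

Definition S_pair (R : realType) (beta gamma : R) (p : {poly rat}) : Prop :=
  (map_poly (ratr : rat -> R) p).[gamma] < (map_poly (ratr : rat -> R) p).[beta].

Definition S_cplx (R : realType) (z : R[i]) (p : {poly rat}) : Prop :=
  0 < complex.Im (map_poly (ratr : rat -> R[i]) p).[z].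

Definition S_derpos (R : realType) (delta : R) (p : {poly rat}) : Prop :=
  0 < (map_poly (ratr : rat -> R) p^`()).[delta].
Definition S_derneg (R : realType) (delta : R) (p : {poly rat}) : Prop :=
  (map_poly (ratr : rat -> R) p^`()).[delta] < 0.

Definition setI_poly (S T : {poly rat} -> Prop) (p : {poly rat}) : Prop :=
  S p /\ T p.

(* Each set is cut out by p(alpha) > 0 and one more strict sign condition
   P(p) > 0.  Take a rational quadratic q = w (x - r)^2 with P(q) > 0 and q
   large enough at alpha, then shift it by a rational constant c so that
   p = q + c still lies in the set while p(beta) + p(gamma), Re p(z), resp.
   p(delta) is negative.  Then p^2 leaves the set, because
   p(beta)^2 - p(gamma)^2 = (p(beta) - p(gamma)) (p(beta) + p(gamma)),
   Im (p(z)^2) = 2 Re p(z) Im p(z) and (p^2)'(delta) = 2 p(delta) p'(delta).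
   The vertex r is a rational approximation, from a prescribed side, of
   (beta + gamma) / 2, Re z, resp. delta. *)

From mathcomp Require Import all_boot all_order all_algebra.
From mathcomp Require Import reals ring lra.
From mathcomp.real_closed Require Import complex.
Set Implicit Arguments. Unset Strict Implicit. Unset Printing Implicit Defensive.
Import Order.TTheory GRing.Theory Num.Theory.
Local Open Scope ring_scope.

Local Notation "p .[ x ]_Q" := (map_poly ratr p).[x]
  (left associativity, format "p .[ x ]_Q").

Lemma hornerQ_addC (F : numFieldType) (p : {poly rat}) (c : rat) (x : F) :
  (p + c%:P).[x]_Q = p.[x]_Q + ratr c.
Proof. by rewrite rmorphD /= map_polyC hornerD hornerC. Qed.

Lemma hornerQ_mul (F : numFieldType) (p q : {poly rat}) (x : F) :
  (p * q).[x]_Q = p.[x]_Q * q.[x]_Q.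
Proof. by rewrite rmorphM hornerM. Qed.

Lemma hornerQ_sqr_XsubC (F : numFieldType) (r : rat) (x : F) :
  (('X - r%:P) ^+ 2).[x]_Q = (x - ratr r) ^+ 2.
Proof. by rewrite rmorphXn /= map_polyXsubC !hornerE. Qed.

Lemma hornerQ_deriv_sqr (F : numFieldType) (p : {poly rat}) (x : F) :
  ((p * p)^`()).[x]_Q = 2 * p.[x]_Q * (p^`()).[x]_Q.
Proof. by rewrite derivM rmorphD /= hornerD !hornerQ_mul; ring. Qed.

Lemma exists_rat_near (R : realType) (d x e : R) : d != 0 -> 0 < e ->
  exists r : rat, 0 < d * (x - ratr r) /\ (x - ratr r) ^+ 2 < e.
Proof.
move=> d0 e0; set e' := Num.min e 1.
have e'0 : 0 < e' by rewrite lt_min e0 ltr01.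
have /andP[e'e e'1] : (e' <= e) && (e' <= 1) by rewrite -le_min.
have [d_gt0 | d_le0] := ltrP 0 d.
  have [r] := @rat_in_itvoo R (x - e') x ltac:(lra).
  by rewrite in_itv /= => /andP[? ?]; exists r; split; nra.
have d_lt0 : d < 0 by rewrite lt_neqAle d0 d_le0.
have [r] := @rat_in_itvoo R x (x + e') ltac:(lra).
by rewrite in_itv /= => /andP[? ?]; exists r; split; nra.
Qed.

Lemma exists_rat_closer (R : realType) (d x y : R) : d != 0 -> x != y ->
  exists r : rat, 0 < d * (x - ratr r) /\ (x - ratr r) ^+ 2 < (y - ratr r) ^+ 2.
Proof.
move=> d0 xy; have yx_gt0 : 0 < (y - x) ^+ 2 / 4.
  by rewrite divr_gt0 // exprn_even_gt0 //= subr_eq0 eq_sym.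
have [r [r_sgn r_near]] := exists_rat_near x d0 yx_gt0.
exists r; split=> //; have := sqr_ge0 (y - x + 2 * (x - ratr r)); nra.
Qed.

Lemma ratr_complex (R : rcfType) (c : rat) : ratr c = (ratr c)%:C%C :> R[i].
Proof. by rewrite -(fmorph_rat (real_complex R)). Qed.

Section NotMulClosed.
Variables (R : realType) (alpha : R).

Lemma S_pair_not_mul_closed_of (beta gamma : R) (q : {poly rat}) :
  q.[gamma]_Q < q.[beta]_Q -> q.[beta]_Q + q.[gamma]_Q < 2 * q.[alpha]_Q ->
  ~ mul_closed (setI_poly (S_pair beta gamma) (Qpos_at alpha)).
Proof.
move=> q_bg q_a closed.
have [c] := @rat_in_itvoo R (- q.[alpha]_Q) (- (q.[beta]_Q + q.[gamma]_Q) / 2) ltac:(lra).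
rewrite in_itv /= => /andP[c_lo c_hi].
have p_in : setI_poly (S_pair beta gamma) (Qpos_at alpha) (q + c%:P).
  by split; rewrite /S_pair /Qpos_at !hornerQ_addC; lra.
have [] := closed _ _ p_in p_in; rewrite /S_pair !hornerQ_mul !hornerQ_addC.
move=> ? _; nra.
Qed.

Lemma S_cplx_not_mul_closed_of (z : R[i]) (q : {poly rat}) :
  complex.Re q.[z]_Q < q.[alpha]_Q -> 0 < complex.Im q.[z]_Q ->
  ~ mul_closed (setI_poly (S_cplx z) (Qpos_at alpha)).
Proof.
case Ez: q.[z]_Q => [a b] /= q_re q_im closed.
have [c] := @rat_in_itvoo R (- q.[alpha]_Q) (- a) ltac:(lra).
rewrite in_itv /= => /andP[c_lo c_hi].
have p_in : setI_poly (S_cplx z) (Qpos_at alpha) (q + c%:P).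
  by split; rewrite /S_cplx /Qpos_at !hornerQ_addC ?Ez ?ratr_complex /= ?addr0; lra.
have [] := closed _ _ p_in p_in; rewrite /S_cplx hornerQ_mul hornerQ_addC Ez ratr_complex /= addr0.
(* [im_sq] is restated at type [R], where [nra] finds the order. *)
move=> im_sq _; have : 0 < (a + ratr c) * b + b * (a + ratr c) :> R := im_sq.
nra.
Qed.

Lemma exists_shift_sign_change (delta : R) (q : {poly rat}) :
  q.[delta]_Q < q.[alpha]_Q ->
  exists p : {poly rat}, [/\ Qpos_at alpha p, p.[delta]_Q < 0 & p^`() = q^`()].
Proof.
move=> q_da; have [c] := @rat_in_itvoo R (- q.[alpha]_Q) (- q.[delta]_Q) ltac:(lra).
rewrite in_itv /= => /andP[c_lo c_hi]; exists (q + c%:P).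
by split; rewrite ?derivD ?derivC ?addr0 // /Qpos_at hornerQ_addC; lra.
Qed.

Lemma S_derpos_not_mul_closed_of (delta : R) (q : {poly rat}) :
  q.[delta]_Q < q.[alpha]_Q -> 0 < (q^`()).[delta]_Q ->
  ~ mul_closed (setI_poly (S_derpos delta) (Qpos_at alpha)).
Proof.
move=> /exists_shift_sign_change[p [p_a p_d dp]] dq closed.
have p_in : setI_poly (S_derpos delta) (Qpos_at alpha) p by split=> //; rewrite /S_derpos dp.
have [] := closed _ _ p_in p_in; rewrite /S_derpos hornerQ_deriv_sqr dp.
move=> ? _; nra.
Qed.

Lemma S_derneg_not_mul_closed_of (delta : R) (q : {poly rat}) :
  q.[delta]_Q < q.[alpha]_Q -> (q^`()).[delta]_Q < 0 ->
  ~ mul_closed (setI_poly (S_derneg delta) (Qpos_at alpha)).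
Proof.
move=> /exists_shift_sign_change[p [p_a p_d dp]] dq closed.
have p_in : setI_poly (S_derneg delta) (Qpos_at alpha) p by split=> //; rewrite /S_derneg dp.
have [] := closed _ _ p_in p_in; rewrite /S_derneg hornerQ_deriv_sqr dp.
move=> ? _; nra.
Qed.

Lemma S_derpos_not_mul_closed (delta : R) : delta != alpha ->
  ~ mul_closed (setI_poly (S_derpos delta) (Qpos_at alpha)).
Proof.
move=> /(exists_rat_closer (oner_neq0 R))[r [r_lt r_closer]].
apply: (@S_derpos_not_mul_closed_of _ (('X - r%:P) ^+ 2)).
  by rewrite !hornerQ_sqr_XsubC.
rewrite expr2 hornerQ_deriv_sqr derivXsubC rmorph1 hornerC map_polyXsubC hornerXsubC.
lra.
Qed.

Lemma S_derneg_not_mul_closed (delta : R) : delta != alpha ->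
  ~ mul_closed (setI_poly (S_derneg delta) (Qpos_at alpha)).
Proof.
have N1_neq0 : -1 != 0 :> R by rewrite oppr_eq0 oner_eq0.
move=> /(exists_rat_closer N1_neq0)[r [r_gt r_closer]].
apply: (@S_derneg_not_mul_closed_of _ (('X - r%:P) ^+ 2)).
  by rewrite !hornerQ_sqr_XsubC.
rewrite expr2 hornerQ_deriv_sqr derivXsubC rmorph1 hornerC map_polyXsubC hornerXsubC.
lra.
Qed.

Lemma S_cplx_not_mul_closed (z : R[i]) : complex.Im z != 0 ->
  ~ mul_closed (setI_poly (S_cplx z) (Qpos_at alpha)).
Proof.
case: z => u v /= v0.
have v2_gt0 : 0 < v ^+ 2 by rewrite exprn_even_gt0.
have [r [r_sgn r_near]] := exists_rat_near u v0 v2_gt0.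
apply: (@S_cplx_not_mul_closed_of _ (('X - r%:P) ^+ 2));
  rewrite !hornerQ_sqr_XsubC ratr_complex expr2 /=.
- have := sqr_ge0 (alpha - ratr r); lra.
- have : 0 < (u - ratr r) * v + v * (u - ratr r) :> R by nra.
  by rewrite !subr0.
Qed.

Lemma S_pair_not_mul_closed (beta gamma : R) : beta != gamma -> gamma != alpha ->
  ~ mul_closed (setI_poly (S_pair beta gamma) (Qpos_at alpha)).
Proof.
move=> bg ga; set m := (beta + gamma) / 2.
have [w [w0 wK]] : exists w : rat,
    ratr w != 0 :> R /\ 0 <= ratr w * ((alpha - beta) * (alpha - gamma)).
  have [K_ge0 | K_lt0] := lerP 0 ((alpha - beta) * (alpha - gamma)).
    by exists 1; rewrite rmorph1 mul1r oner_eq0.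
  by exists (-1); rewrite rmorphN1 oppr_eq0 oner_eq0; split=> //; lra.
have dw : ratr w * (beta - gamma) != 0 by rewrite mulf_neq0 // subr_eq0.
have ma : m != m + (alpha - gamma) by apply: contra_neq ga => ?; lra.
have [r [r_sgn r_closer]] := exists_rat_closer dw ma.
have a2_gt0 : 0 < (alpha - gamma) ^+ 2 by rewrite exprn_even_gt0 //= subr_eq0 eq_sym.
have same_sign : 0 < (alpha - gamma) * (alpha - gamma + 2 * (m - ratr r)) by nra.
have wK_shifted : 0 <= ratr w * (alpha - beta) * (alpha - gamma + 2 * (m - ratr r)).
  by nra.
(* With t = m - r and q = w (x - r)^2: q(beta) - q(gamma) = 2 w (beta - gamma) t
   and 2 q(alpha) - q(beta) - q(gamma) = 2 w ((beta - gamma) t + (alpha - beta)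
   (alpha - gamma + 2 t)), both positive by [r_sgn] and [wK_shifted]. *)
rewrite /m in r_sgn wK_shifted.
apply: (@S_pair_not_mul_closed_of _ _ (w%:P * ('X - r%:P) ^+ 2));
  rewrite !(hornerQ_mul w%:P) map_polyC !hornerC !hornerQ_sqr_XsubC; nra.
Qed.

End NotMulClosed.

Theorem lemma4p14 (R : realType) (alpha : R) :
  (forall beta gamma : R, beta != alpha -> gamma != alpha -> beta != gamma ->
     ~ mul_closed (setI_poly (S_pair beta gamma) (Qpos_at alpha))) /\
  (forall beta : R, beta != alpha ->
     ~ mul_closed (setI_poly (S_pair alpha beta) (Qpos_at alpha))) /\
  (forall z : R[i], complex.Im z != 0 ->
     ~ mul_closed (setI_poly (S_cplx z) (Qpos_at alpha))) /\
  (forall delta : R, delta != alpha ->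
     ~ mul_closed (setI_poly (S_derpos delta) (Qpos_at alpha)) /\
     ~ mul_closed (setI_poly (S_derneg delta) (Qpos_at alpha))).
Proof.
split; first by move=> beta gamma _ ga bg; exact: S_pair_not_mul_closed.
split; first by move=> beta ba; apply: S_pair_not_mul_closed => //; rewrite eq_sym.
split; first exact: S_cplx_not_mul_closed.
by move=> delta da; split; [exact: S_derpos_not_mul_closed | exact: S_derneg_not_mul_closed].
Qed.
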